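(* Consider the two-stage cooperative cellular/D2D model and the packet grouping procedure described in the context. Every coded packet in the group $\mathcal{M}_l$ cannot be sent by any single device in one D2D transmission, but it can be split into two coded packets (each an XOR of a subset of its constituent packets), each of which is held in full by some device; hence its content can be delivered to all devices over D2D links in exactly two transmission slots.
   Context: Model: a set $\mathcal{N}$ of $N\ge 2$ cooperating devices want a finite packet set $\mathcal{M}$. After a lossy first-stage cellular broadcast, device $n$ holds $\mathcal{H}_n\subseteq\mathcal{M}$ and misses $\mathcal{W}_n=\mathcal{M}\setminus\mathcal{H}_n$; every packet of $\mathcal{M}$ is wanted by some device. Over D2D, a device can broadcast to all other devices a coded packet only if it holds all uncoded packets it is composed of; a coded packet is instantly decodable for a device if it contains exactly one packet from that device's Wants set. Grouping procedure: process the packets $p_1,\dots,p_M$ of $\mathcal{M}$ in order. For $p_m$ form a vector $v_m$ of length $N$ with $v_m[n]=p_m$ if $p_m\in\mathcal{W}_n$ and $v_m[n]=\mathrm{NULL}$ otherwise. If some previously formed vector $v_{m'}$ satisfies $v_{m'}[n]=\mathrm{NULL}$ for every $n$ with $v_m[n]=p_m$, replace $v_{m'}$ by the entrywise sum $v_{m'}+v_m$ (with $p+\mathrm{NULL}=p$) and discard $v_m$; otherwise keep $v_m$. Each final vector defines a coded packet, the XOR of the distinct packets among its non-NULL entries. $\mathcal{M}_c$ consists of the coded packets of vectors whose entries are all equal and non-NULL; $\mathcal{M}_d$ of those of vectors with at least one NULL entry; $\mathcal{M}_l$ of those of the remaining vectors (no NULL entry and at least two distinct entries), i.e., each packet in $\mathcal{M}_l$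 contains exactly one packet from each $\mathcal{W}_n$ and at least two distinct packets. *)

From mathcomp Require Import all_boot.
Set Implicit Arguments. Unset Strict Implicit. Unset Printing Implicit Defensive.

Section Grouping.
Variables (D P : finType).  (* D = devices N, P = packets M *)
Variable H : D -> {set P}.   (* Has sets after the first stage *)

Definition W (n : D) : {set P} := ~: H n.

(* a grouping vector: entry n is Some p (packet p) or None (NULL) *)
Definition gvec := {ffun D -> option P}.
Definition gnull : gvec := [ffun=> None].

Definition pvec (p : P) : gvec := [ffun n => if p \in W n then Some p else None].

Definition compat (v' v : gvec) : bool :=
  [forall n, (v n != None) ==> (v' n == None)].

Definition vadd (v' v : gvec) : gvec :=
  [ffun n => if v n is Some q then Some q else v' n].

(* one step of the procedure processing packet p; if several previously
   formed vectors are compatible, any of them may be chosen *)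
Inductive group_step (p : P) (st st' : seq gvec) : Prop :=
| GMerge (i : nat) of i < size st & compat (nth gnull st i) (pvec p)
    & st' = set_nth gnull st i (vadd (nth gnull st i) (pvec p))
| GNew of (forall i, i < size st -> ~~ compat (nth gnull st i) (pvec p))
    & st' = rcons st (pvec p).

Inductive grouping : seq P -> seq gvec -> Prop :=
| Gnil : grouping [::] [::]
| Gsnoc ps p st st' of grouping ps st & group_step p st st' :
    grouping (rcons ps p) st'.

End Grouping.

(* the coded packet of a vector, represented by the set of distinct packets
   it XORs together *)
Definition coded (D P : finType) (v : gvec D P) : {set P} :=
  [set p | [exists n, v n == Some p]].

Definition in_Ml (D P : finType) (v : gvec D P) : bool :=
  [forall n, v n != None] && (1 < #|coded v|).

(* Every vector produced by the grouping carries a packet q exactly at the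
   devices that want q: this holds for the vector of a single packet, and a
   merge only fills NULL positions with a packet wanted precisely there.
   Hence the device at which a vector has entry q misses q but holds every
   other packet of the coded packet.  For a vector of M_l, which has no NULL
   entry, no device holds the whole coded packet; and if p <> y are two of
   its packets, sitting at devices n2 and n1, then n1 holds p and n2 holds
   all packets other than p, which splits the coded packet in two. *)

From mathcomp Require Import all_boot.

Set Implicit Arguments.
Unset Strict Implicit.
Unset Printing Implicit Defensive.

Lemma set_nth_subset (T : eqType) (x0 : T) (s : seq T) i y :
  i < size s -> {subset set_nth x0 s i y <= y :: s}.
Proof.
move=> lt_i x; rewrite set_nthE lt_i mem_cat inE => /or3P[x_take | /eqP-> | x_drop].
- by rewrite inE (mem_take x_take) orbT.
- by rewrite mem_head.
- by rewrite inE (mem_drop x_drop) orbT.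
Qed.

Section WantedExactly.

Variables (D P : finType) (H : D -> {set P}).

Lemma codedP (w : gvec D P) q : reflect (exists n, w n = Some q) (q \in coded w).
Proof. by rewrite inE; apply: (iffP existsP) => -[n /eqP]; exists n. Qed.

Lemma coded_vadd (w v : gvec D P) q :
  q \in coded (vadd w v) -> (q \in coded w) || (q \in coded v).
Proof.
case/codedP=> n; rewrite ffunE.
case vn: (v n) => [r|] => [[<-] | wn]; apply/orP; [right | left];
  by apply/codedP; exists n.
Qed.

Definition wanted_exactly (w : gvec D P) : Prop :=
  forall n q, q \in coded w -> (w n == Some q) = (q \in W H n).

Lemma wanted_exactly_pvec p : wanted_exactly (pvec H p).
Proof.
move=> n q /codedP[m]; rewrite ffunE; case: ifP => // _ [<-].
by rewrite ffunE; case: ifP; rewrite ?eqxx.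
Qed.

Lemma wanted_exactly_vadd w p :
  wanted_exactly w -> compat w (pvec H p) -> wanted_exactly (vadd w (pvec H p)).
Proof.
move=> exact_w /forallP compat_w n q /coded_vadd/orP[q_w | q_p]; last first.
  case/codedP: q_p => m; rewrite ffunE; case: ifP => // _ [<-] {q}.
  rewrite !ffunE; case: ifPn => [_ | p_nW]; first by rewrite eqxx.
  apply/negbTE/eqP => wn.
  have p_w : p \in coded w by apply/codedP; exists n.
  by move: (exact_w n p p_w); rewrite wn eqxx (negbTE p_nW).
have := compat_w n; rewrite !ffunE; case: ifPn => [p_W /eqP wn_null | _ _].
  have q_nW : q \notin W H n by rewrite -(@exact_w n q q_w) wn_null.
  rewrite (negbTE q_nW); apply/negbTE/eqP => -[p_q].
  by move: q_nW; rewrite -p_q p_W.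
exact: exact_w.
Qed.

Lemma grouping_wanted_exactly ps st :
  grouping H ps st -> {in st, forall w, wanted_exactly w}.
Proof.
elim=> [|{}ps p {}st st' _ IHst [i lt_i compat_i -> | _ ->]] w //.
- move/(set_nth_subset lt_i); rewrite inE => /orP[/eqP -> | /IHst //].
  by apply: wanted_exactly_vadd => //; apply/IHst/mem_nth.
- by rewrite mem_rcons inE => /orP[/eqP -> | /IHst]; first exact: wanted_exactly_pvec.
Qed.

Variable w : gvec D P.
Hypothesis exact_w : wanted_exactly w.

Lemma wanted_exactly_notin_has n q : w n = Some q -> q \notin H n.
Proof.
move=> wn; have q_w : q \in coded w by apply/codedP; exists n.
by have := @exact_w n q q_w; rewrite wn eqxx inE => <-.
Qed.

Lemma wanted_exactly_setD1_has n p : w n = Some p -> coded w :\ p \subset H n.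
Proof.
move=> wn; apply/subsetP => q; rewrite in_setD1 => /andP[q_p q_w].
have := @exact_w n q q_w; rewrite wn inE; case: (q \in H n) => //= /eqP[p_q].
by move: q_p; rewrite p_q eqxx.
Qed.

Lemma wanted_exactly_not_held_whole :
  (forall n, w n != None) -> ~ exists n, coded w \subset H n.
Proof.
move=> no_null [n /subsetP coded_H]; case wn: (w n) (no_null n) => [q|] // _.
have q_w : q \in coded w by apply/codedP; exists n.
by have := wanted_exactly_notin_has wn; rewrite coded_H.
Qed.

Lemma wanted_exactly_split_held : 1 < #|coded w| ->
  exists (S1 S2 : {set P}) (n1 n2 : D),
    [/\ S1 != set0, S2 != set0, [disjoint S1 & S2] & S1 :|: S2 = coded w] /\
    S1 \subset H n1 /\ S2 \subset H n2.
Proof.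
case/card_gt1P=> p [y [p_w y_w p_y]].
have [n2 wn2] := codedP _ _ p_w; have [n1 wn1] := codedP _ _ y_w.
exists [set p], (coded w :\ p), n1, n2; split; first split.
- by apply/set0Pn; exists p; rewrite set11.
- by apply/set0Pn; exists y; rewrite in_setD1 y_w eq_sym p_y.
- by rewrite disjoints1 !inE eqxx.
- exact: setD1K.
split; last exact: wanted_exactly_setD1_has wn2.
apply: subset_trans (wanted_exactly_setD1_has wn1).
by rewrite sub1set in_setD1 p_y.
Qed.

End WantedExactly.

Theorem lemma1 (D P : finType) (H : D -> {set P}) (ps : seq P)
    (st : seq (gvec D P)) (v : gvec D P) :
  1 < #|D| ->
  (forall p : P, exists n : D, p \in W H n) ->
  uniq ps -> (forall p : P, p \in ps) ->
  grouping H ps st -> v \in st -> in_Ml v ->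
  (* no single device holds all packets of the coded packet *)
  ~ (exists n : D, coded v \subset H n) /\
  (* split into two coded packets, each held in full by some device; the two
     broadcasts together deliver XOR of coded v to every device *)
  (exists (S1 S2 : {set P}) (n1 n2 : D),
     [/\ S1 != set0, S2 != set0, [disjoint S1 & S2] & S1 :|: S2 = coded v] /\
     S1 \subset H n1 /\ S2 \subset H n2).
Proof.
(* The invariant holds for any grouping. *)
move=> _ _ _ _ grouped v_st /andP[/forallP no_null two_packets].
have exact_v := grouping_wanted_exactly grouped v_st.
split; first exact: wanted_exactly_not_held_whole.
exact: wanted_exactly_split_held.
Qed.
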